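(* Let $\Omega\subset K$ be a simply connected domain, where $K=\mathbb{C}\setminus(-\infty,0]$. The following are equivalent: (a) there is a conformal map $f\colon\mathbb{H}\to\Omega$ with $\angle\lim_{z\to\infty}f(z)=\infty$ such that $\sqrt f$ is conformal at infinity, where $\sqrt{\cdot}$ is the branch mapping $K$ conformally onto the right half-plane; (b) there is a conformal map $g\colon K\to\Omega$ with $g(\infty)=\infty$ such that $\angle\lim_{w\to\infty}g(w)/w\in\mathbb{C}\setminus\{0\}$ (angular limit in $K$).
   Context: $\mathbb{H}$ is the upper half-plane. For a holomorphic $F\colon\mathbb{H}\to\mathbb{C}$, $\angle\lim_{z\to\infty}F(z)=\ell$ means $F(z)\to\ell$ as $z\to\infty$ within each sector $\{|\arg z-\pi/2|<\theta\}$, $\theta\in(0,\pi/2)$. A holomorphic $F\colon\mathbb{H}\to\mathbb{C}$ with $\angle\lim_{z\to\infty}F(z)=\infty$ is conformal at infinity if $\angle\lim_{z\to\infty}F(z)/z\in\mathbb{C}\setminus\{0\}$. For maps on $K$, angular limits at $\infty$ are taken as $w\to\infty$ within each sector $\{|\arg w|<\theta\}$, $\theta\in(0,\pi)$. *)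

From Stdlib Require Import Reals.
From Coquelicot Require Import Coquelicot.
Open Scope R_scope.

(* Principal argument, valid (with values in (-PI, PI)) on
   K = C \ (-oo, 0]: Arg w = 2 atan (Im w / (|w| + Re w)). *)
Definition Arg (w : C) : R := 2 * atan (Im w / (Cmod w + Re w)).

Definition Kslit : C -> Prop := fun w => ~ (Im w = 0 /\ Re w <= 0).
Definition Hupper : C -> Prop := fun z => 0 < Im z.

(* Principal branch of the square root on K, mapping K conformally onto
   the right half-plane. *)
Definition Csqrt (w : C) : C :=
  (sqrt (Cmod w) * cos (Arg w / 2), sqrt (Cmod w) * sin (Arg w / 2))%R.

Definition holomorphic_on (U : C -> Prop) (f : C -> C) : Prop :=
  forall z, U z -> ex_derive (K := C_AbsRing) (V := C_NormedModule) f z.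

Definition connected_set (U : C -> Prop) : Prop :=
  (exists z, U z) /\
  forall A B : C -> Prop, open A -> open B ->
    (forall z, U z -> A z \/ B z) ->
    (forall z, U z -> A z -> B z -> False) ->
    (exists z, U z /\ A z) -> (exists z, U z /\ B z) -> False.

Definition is_domain (U : C -> Prop) : Prop := open U /\ connected_set U.

(* Loops/homotopies are given as continuous maps on
   R (resp. R*R), only their values on [0,1] (resp. [0,1]^2) matter. *)
Definition simply_connected (U : C -> Prop) : Prop :=
  forall gamma : R -> C,
    (forall t, continuous gamma t) ->
    (forall t, 0 <= t <= 1 -> U (gamma t)) ->
    gamma 0 = gamma 1 ->
    exists (Hh : R * R -> C) (c : C),
      (forall p, continuous Hh p) /\
      (forall s t, 0 <= s <= 1 -> 0 <= t <= 1 -> U (Hh (s, t))) /\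
      (forall t, 0 <= t <= 1 -> Hh (0, t) = gamma t) /\
      (forall t, 0 <= t <= 1 -> Hh (1, t) = c) /\
      (forall s, 0 <= s <= 1 -> Hh (s, 0) = Hh (s, 1)).

Definition conformal_map (U V : C -> Prop) (f : C -> C) : Prop :=
  holomorphic_on U f /\
  (forall z1 z2, U z1 -> U z2 -> f z1 = f z2 -> z1 = z2) /\
  (forall z, U z -> V (f z)) /\
  (forall w, V w -> exists z, U z /\ f z = w).

Definition sectorH (theta : R) (z : C) : Prop :=
  Hupper z /\ Rabs (Arg z - PI / 2) < theta.
Definition sectorK (theta : R) (w : C) : Prop :=
  Kslit w /\ Rabs (Arg w) < theta.

Definition lim_inf_within (S : C -> Prop) (F : C -> C) (l : C) : Prop :=
  forall eps, 0 < eps -> exists M, forall z, S z -> M < Cmod z ->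
    Cmod (F z - l)%C < eps.
Definition tends_to_inf_within (S : C -> Prop) (F : C -> C) : Prop :=
  forall A, exists M, forall z, S z -> M < Cmod z -> A < Cmod (F z).

Definition angH_lim (F : C -> C) (l : C) : Prop :=
  forall theta, 0 < theta < PI / 2 -> lim_inf_within (sectorH theta) F l.
Definition angH_lim_inf (F : C -> C) : Prop :=
  forall theta, 0 < theta < PI / 2 -> tends_to_inf_within (sectorH theta) F.

Definition angK_lim (F : C -> C) (l : C) : Prop :=
  forall theta, 0 < theta < PI -> lim_inf_within (sectorK theta) F l.
Definition angK_lim_inf (F : C -> C) : Prop :=
  forall theta, 0 < theta < PI -> tends_to_inf_within (sectorK theta) F.

Definition conformal_at_infinity (F : C -> C) : Prop :=
  angH_lim_inf F /\ exists c : C, c <> 0%C /\ angH_lim (fun z => (F z / z)%C) c.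

(* The maps [negsq z = -z^2] and [isqrt w = i sqrt w] are mutually inverse
   conformal bijections between H and K; they carry the sectors of H onto those
   of K and satisfy |negsq z| = |z|^2.  Given f, the map g = f o isqrt works,
   since g(w)/w = -(sqrt f(z) / z)^2 with z = isqrt w tends to -c^2.  Given g,
   the map f = g o negsq works: now (sqrt f(z) / z)^2 = -g(w)/w tends to -c, so
   far out in a sector sqrt f(z) / z is close to one of the two square roots
   +-sigma of -c.  Which one is decided by the sign of Re (sqrt f(z) / z * conj
   sigma), a continuous function that does not vanish there; since the far part
   of every sector is connected to the imaginary axis, this sign is the same in
   all sectors, and sqrt f(z) / z tends to sigma or to -sigma. *)

From Stdlib Require Import Reals Lra Psatz Classical.
From Coquelicot Require Import Coquelicot.
Open Scope R_scope.

(** * Polar form and the principal square root *)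

Lemma C_eq (a b : C) : Re a = Re b -> Im a = Im b -> a = b.
Proof. destruct a, b; simpl; intros; subst; auto. Qed.

Lemma Re_le_Cmod z : Re z <= Cmod z.
Proof. pose proof (re_le_Cmod z). pose proof (Rle_abs (Re z)). lra. Qed.

Lemma Re_pos_neq0 z : 0 < Re z -> z <> 0%C.
Proof. intros Hz E. rewrite E in Hz. cbn in Hz. lra. Qed.

Lemma Arg_bound w : -PI < Arg w < PI.
Proof. unfold Arg. pose proof (atan_bound (Im w / (Cmod w + Re w))). lra. Qed.

Lemma Kslit_iff w : Kslit w <-> 0 < Cmod w + Re w.
Proof.
  pose proof (Cmod2_alt w) as Hm. pose proof (Cmod_ge_0 w).
  unfold Kslit. split.
  - intros HK. destruct (Rle_dec (Re w) 0) as [Hle|Hgt]; [|nra].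
    assert (0 < Im w * Im w) by (apply Rsqr_pos_lt; tauto).
    nra.
  - intros Hpos [Him Hre]. rewrite Him in Hm. nra.
Qed.

Lemma Kslit_Cmod_pos w : Kslit w -> 0 < Cmod w.
Proof.
  intros HK. apply Kslit_iff in HK. pose proof (Re_le_Cmod w). lra.
Qed.

Lemma cos_2atan t : cos (2 * atan t) = (1 - t * t) / (1 + t * t).
Proof.
  rewrite cos_2a, cos_atan, sin_atan.
  assert (Hs : sqrt (1 + t²) * sqrt (1 + t²) = 1 + t²)
    by (apply sqrt_sqrt; unfold Rsqr; nra).
  assert (0 < sqrt (1 + t²)) by (apply sqrt_lt_R0; unfold Rsqr; nra).
  unfold Rsqr in *. set (S := sqrt (1 + t * t)) in *.
  replace (1 / S * (1 / S) - t / S * (t / S)) with ((1 - t * t) / (S * S)) by (field; lra).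
  now rewrite Hs.
Qed.

Lemma sin_2atan t : sin (2 * atan t) = 2 * t / (1 + t * t).
Proof.
  rewrite sin_2a, cos_atan, sin_atan.
  assert (Hs : sqrt (1 + t²) * sqrt (1 + t²) = 1 + t²)
    by (apply sqrt_sqrt; unfold Rsqr; nra).
  assert (0 < sqrt (1 + t²)) by (apply sqrt_lt_R0; unfold Rsqr; nra).
  unfold Rsqr in *. set (S := sqrt (1 + t * t)) in *.
  replace (2 * (t / S) * (1 / S)) with (2 * t / (S * S)) by (field; lra).
  now rewrite Hs.
Qed.

Lemma polar_form w : Kslit w ->
  Re w = Cmod w * cos (Arg w) /\ Im w = Cmod w * sin (Arg w).
Proof.
  intros HK. pose proof (Kslit_Cmod_pos w HK) as Hm0.
  apply Kslit_iff in HK. pose proof (Cmod2_alt w) as Hm.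
  unfold Arg. rewrite cos_2atan, sin_2atan.
  set (m := Cmod w) in *. set (x := Re w) in *. set (y := Im w) in *.
  assert (Hd : (m + x) * (m + x) + y * y = 2 * m * (m + x)) by nra.
  assert (Et : forall u, u / (1 + y / (m + x) * (y / (m + x)))
                  = u * ((m + x) * (m + x)) / (2 * m * (m + x)))
    by (intros u; rewrite <- Hd; field; split; nra).
  rewrite !Et. split; field_simplify; try lra.
  replace (x ^ 2 + 2 * x * m + m ^ 2 - y ^ 2) with (x * (2 * x + 2 * m)) by nra.
  field; lra.
Qed.

Lemma Cmod_polar r phi : 0 <= r -> Cmod (r * cos phi, r * sin phi) = r.
Proof.
  intros Hr. unfold Cmod; cbn [fst snd].
  replace ((r * cos phi) ^ 2 + (r * sin phi) ^ 2) with (r ^ 2)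
    by (pose proof (sin2_cos2 phi); unfold Rsqr in *; nra).
  apply sqrt_pow2; lra.
Qed.

Lemma Arg_polar r phi : 0 < r -> -PI < phi < PI ->
  Arg (r * cos phi, r * sin phi) = phi.
Proof.
  intros Hr Hphi. unfold Arg, Re, Im. rewrite Cmod_polar by lra. cbn [fst snd].
  assert (Hc : 0 < cos (phi / 2)) by (apply cos_gt_0; lra).
  replace phi with (2 * (phi / 2)) at 1 2 by field.
  rewrite sin_2a, cos_2a_cos.
  replace (r + r * (2 * cos (phi / 2) * cos (phi / 2) - 1))
    with (2 * r * (cos (phi / 2) * cos (phi / 2))) by ring.
  replace (r * (2 * sin (phi / 2) * cos (phi / 2))
           / (2 * r * (cos (phi / 2) * cos (phi / 2))))
    with (tan (phi / 2)) by (unfold tan; field; lra).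
  rewrite atan_tan by lra. field.
Qed.

Lemma Csqrt_sq w : Kslit w -> (Csqrt w * Csqrt w)%C = w.
Proof.
  intros HK. destruct (polar_form w HK) as [Hre Him].
  assert (Hs : sqrt (Cmod w) * sqrt (Cmod w) = Cmod w)
    by (apply sqrt_sqrt, Cmod_ge_0).
  assert (Eh : Arg w = 2 * (Arg w / 2)) by field.
  apply C_eq; rewrite ?re_mult, ?im_mult; unfold Csqrt, Re, Im in *; cbn [fst snd].
  all: set (q := sqrt (Cmod w)) in *.
  - rewrite Hre, Eh, cos_2a. replace (2 * (Arg w / 2) / 2) with (Arg w / 2) by field.
    rewrite <- Hs. ring.
  - rewrite Him, Eh, sin_2a. replace (2 * (Arg w / 2) / 2) with (Arg w / 2) by field.
    rewrite <- Hs. ring.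
Qed.

Lemma Csqrt_re_pos w : Kslit w -> 0 < Re (Csqrt w).
Proof.
  intros HK. unfold Csqrt, Re; cbn [fst].
  apply Rmult_lt_0_compat.
  - apply sqrt_lt_R0, Kslit_Cmod_pos, HK.
  - pose proof (Arg_bound w). apply cos_gt_0; lra.
Qed.

Lemma Cmod_Csqrt w : Cmod (Csqrt w) = sqrt (Cmod w).
Proof. apply Cmod_polar, sqrt_pos. Qed.

Lemma Csqrt_unique w s : Kslit w -> 0 < Re s -> (s * s)%C = w -> s = Csqrt w.
Proof.
  intros HK Hs Hsq. pose proof (Csqrt_re_pos w HK) as Ha.
  set (a := Csqrt w) in *.
  assert (Hsum : (s + a)%C <> 0%C) by (apply Re_pos_neq0; rewrite re_plus; lra).
  assert (Hprod : ((s - a) * (s + a))%C = 0%C).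
  { replace ((s - a) * (s + a))%C with (s * s - a * a)%C by ring.
    rewrite Hsq. unfold a. rewrite Csqrt_sq by exact HK. ring. }
  replace s with ((s - a) * (s + a) / (s + a) + a)%C by (field; exact Hsum).
  rewrite Hprod. field. exact Hsum.
Qed.

Lemma Cexists_sqrt (u : C) : exists s : C, (s * s)%C = u.
Proof.
  destruct (classic (Kslit u)) as [HK | HK].
  - exists (Csqrt u). apply Csqrt_sq, HK.
  - apply NNPP in HK. destruct HK as [Him Hre].
    exists (0, sqrt (- Re u)). pose proof (sqrt_sqrt (- Re u)).
    destruct u as [a b]; unfold Re, Im in *; cbn in *. apply C_eq; cbn; [nra | subst; ring].
Qed.

Lemma Cmod_sq_sub_le (p l : C) : Cmod (p - l)%C <= 1 ->
  Cmod (p * p - l * l)%C <= Cmod (p - l)%C * (1 + 2 * Cmod l).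
Proof.
  intros Hpl.
  replace (p * p - l * l)%C with ((p - l) * ((p - l) + (l + l)))%C by ring.
  rewrite Cmod_mult. apply Rmult_le_compat_l; [apply Cmod_ge_0|].
  eapply Rle_trans; [apply Cmod_triangle|].
  assert (Cmod (l + l)%C <= 2 * Cmod l) by (eapply Rle_trans; [apply Cmod_triangle | lra]).
  lra.
Qed.

Lemma close_to_pm_sqrt (p s : C) d : 0 < d -> Cmod (p * p - s * s)%C < d * d ->
  Cmod (p - s)%C < d \/ Cmod (p + s)%C < d.
Proof.
  intros Hd Hps.
  replace (p * p - s * s)%C with ((p - s) * (p + s))%C in Hps by ring.
  rewrite Cmod_mult in Hps.
  pose proof (Cmod_ge_0 (p - s)%C). pose proof (Cmod_ge_0 (p + s)%C).
  destruct (Rlt_dec (Cmod (p - s)%C) d); [now left | right; nra].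
Qed.

(** * The conformal bijections between H and K *)

Definition negsq (z : C) : C := (- (z * z))%C.
Definition isqrt (w : C) : C := (Ci * Csqrt w)%C.

Lemma Hupper_neq0 z : Hupper z -> z <> 0%C.
Proof. intros Hz E. rewrite E in Hz. unfold Hupper in Hz. cbn in Hz. lra. Qed.

Lemma negsq_Kslit z : Hupper z -> Kslit (negsq z).
Proof.
  unfold Hupper, Kslit, negsq. destruct z as [x y]; unfold Re, Im; cbn.
  intros Hy [Him Hre].
  assert (x = 0) by nra. subst x. nra.
Qed.

Lemma isqrt_Hupper w : Kslit w -> Hupper (isqrt w).
Proof.
  intros HK. unfold Hupper, isqrt. rewrite im_mult. cbn [Re Im Ci fst snd].
  pose proof (Csqrt_re_pos w HK). unfold Re in *. lra.
Qed.

Lemma isqrt_negsq z : Hupper z -> isqrt (negsq z) = z.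
Proof.
  intros Hz. unfold isqrt.
  rewrite <- (Csqrt_unique (negsq z) (Im z, - Re z)).
  - destruct z. apply C_eq; cbn; ring.
  - apply negsq_Kslit, Hz.
  - exact Hz.
  - unfold negsq. destruct z. apply C_eq; cbn; ring.
Qed.

Lemma negsq_isqrt w : Kslit w -> negsq (isqrt w) = w.
Proof.
  intros HK. unfold negsq, isqrt.
  transitivity (Csqrt w * Csqrt w)%C; [|apply Csqrt_sq, HK].
  destruct (Csqrt w). apply C_eq; cbn; ring.
Qed.

Lemma Cmod_negsq z : Cmod (negsq z) = Cmod z * Cmod z.
Proof. unfold negsq. now rewrite Cmod_opp, Cmod_mult. Qed.

Lemma Cmod_isqrt w : Cmod (isqrt w) = sqrt (Cmod w).
Proof. unfold isqrt. now rewrite Cmod_mult, Cmod_Ci, Cmod_Csqrt, Rmult_1_l. Qed.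

Lemma quot_negsq (u z : C) : Kslit u -> z <> 0%C -> (u / negsq z)%C = negsq (Csqrt u / z)%C.
Proof.
  intros Hu Hz. unfold negsq. rewrite <- (Csqrt_sq u Hu) at 1. field. exact Hz.
Qed.

Lemma isqrt_sectorK theta w : sectorK theta w -> sectorH (theta / 2) (isqrt w).
Proof.
  intros [HK Ht]. split; [apply isqrt_Hupper, HK|].
  pose proof (Arg_bound w).
  assert (E : isqrt w = (sqrt (Cmod w) * cos (Arg w / 2 + PI / 2),
                         sqrt (Cmod w) * sin (Arg w / 2 + PI / 2))).
  { unfold isqrt, Csqrt. rewrite cos_plus, sin_plus, cos_PI2, sin_PI2.
    apply C_eq; cbn; ring. }
  rewrite E, Arg_polar by (try apply sqrt_lt_R0, Kslit_Cmod_pos, HK; lra).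
  replace (Arg w / 2 + PI / 2 - PI / 2) with (Arg w / 2) by ring.
  rewrite Rabs_div, (Rabs_right 2) by lra. lra.
Qed.

Lemma negsq_sectorH theta z : theta < PI / 2 ->
  sectorH theta z -> sectorK (2 * theta) (negsq z).
Proof.
  intros Hth [Hz Ht]. split; [apply negsq_Kslit, Hz|].
  assert (HK : Kslit z) by (unfold Kslit, Hupper in *; lra).
  destruct (polar_form z HK) as [Hre Him].
  pose proof (Kslit_Cmod_pos z HK).
  apply Rabs_lt_between' in Ht.
  assert (E : negsq z = (Cmod z * Cmod z * cos (2 * Arg z - PI),
                         Cmod z * Cmod z * sin (2 * Arg z - PI))).
  { rewrite cos_minus, sin_minus, cos_PI, sin_PI, cos_2a, sin_2a.
    assert (Hn : negsq z = (Im z * Im z - Re z * Re z, - (2 * Re z * Im z)))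
      by (unfold negsq; destruct z; apply C_eq; cbn; ring).
    rewrite Hn, Hre, Him. apply C_eq; unfold Re, Im; cbn [fst snd]; ring. }
  rewrite E, Arg_polar by nra.
  apply Rabs_def1; lra.
Qed.

(** * Continuity and holomorphy *)

Section RealContinuity.
Context {T : UniformSpace}.

Lemma continuous_Rmult (f g : T -> R) x :
  continuous f x -> continuous g x -> continuous (fun y => f y * g y) x.
Proof. apply (continuous_mult (K := R_AbsRing)). Qed.

Lemma continuous_Rplus (f g : T -> R) x :
  continuous f x -> continuous g x -> continuous (fun y => f y + g y) x.
Proof. apply (continuous_plus (K := R_AbsRing) (V := R_NormedModule)). Qed.

Lemma continuous_Ropp (f : T -> R) x :
  continuous f x -> continuous (fun y => - f y) x.
Proof. apply (continuous_opp (K := R_AbsRing) (V := R_NormedModule)). Qed.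

Lemma continuous_Rminus (f g : T -> R) x :
  continuous f x -> continuous g x -> continuous (fun y => f y - g y) x.
Proof. intros. apply continuous_Rplus, continuous_Ropp; assumption. Qed.

Lemma continuous_Rcomp (f : T -> R) (h : R -> R) x :
  continuous f x -> continuous h (f x) -> continuous (fun y => h (f y)) x.
Proof. apply continuous_comp. Qed.

Lemma continuous_C_pair (f g : T -> R) x :
  continuous f x -> continuous g x ->
  continuous (U := C_UniformSpace) (fun y => ((f y, g y) : C)) x.
Proof.
  intros Hf Hg. apply filterlim_locally. intros eps.
  apply filterlim_locally with (eps := eps) in Hf.
  apply filterlim_locally with (eps := eps) in Hg.
  generalize (filter_and _ _ Hf Hg). apply filter_imp. now intros y [H1 H2].
Qed.

End RealContinuity.

Lemma continuous_Re (w : C) : continuous (T := C_UniformSpace) Re w.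
Proof. destruct w as [a b]. apply (continuous_fst (U := R_UniformSpace) (V := R_UniformSpace)). Qed.

Lemma continuous_Im (w : C) : continuous (T := C_UniformSpace) Im w.
Proof. destruct w as [a b]. apply (continuous_snd (U := R_UniformSpace) (V := R_UniformSpace)). Qed.

Lemma continuous_Cmod (w : C) : continuous (T := C_UniformSpace) Cmod w.
Proof. apply (filterlim_norm (K := C_AbsRing) (V := C_NormedModule)). Qed.

Lemma Kslit_open : open Kslit.
Proof.
  intros w HK. apply Kslit_iff in HK.
  assert (Hc : continuous (T := C_UniformSpace) (fun z => Cmod z + Re z) w)
    by (apply continuous_Rplus; [apply continuous_Cmod | apply continuous_Re]).
  apply filterlim_locally with (eps := mkposreal _ HK) in Hc.
  generalize Hc. apply filter_imp. intros y Hy. apply Kslit_iff.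
  change (Rabs (Cmod y + Re y - (Cmod w + Re w)) < Cmod w + Re w) in Hy.
  apply Rabs_lt_between in Hy. lra.
Qed.

Lemma continuous_Arg w : Kslit w -> continuous (T := C_UniformSpace) Arg w.
Proof.
  intros HK. apply Kslit_iff in HK. unfold Arg, Rdiv.
  apply continuous_Rmult; [apply continuous_const|].
  apply (continuous_Rcomp (fun z : C => Im z * / (Cmod z + Re z)) atan);
    [|apply continuous_atan].
  apply continuous_Rmult; [apply continuous_Im|].
  apply (continuous_Rcomp (fun z : C => Cmod z + Re z) Rinv);
    [|apply continuous_Rinv; lra].
  apply continuous_Rplus; [apply continuous_Cmod | apply continuous_Re].
Qed.

Lemma continuous_Csqrt w : Kslit w ->
  continuous (T := C_UniformSpace) (U := C_UniformSpace) Csqrt w.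
Proof.
  intros HK. unfold Csqrt.
  assert (Hr : continuous (T := C_UniformSpace) (fun z => sqrt (Cmod z)) w)
    by (apply (continuous_Rcomp Cmod sqrt); [apply continuous_Cmod | apply continuous_sqrt]).
  assert (Ha : continuous (T := C_UniformSpace) (fun z => Arg z / 2) w)
    by (apply continuous_Rmult; [apply continuous_Arg, HK | apply continuous_const]).
  apply continuous_C_pair; apply continuous_Rmult; try exact Hr.
  - apply (continuous_Rcomp (fun z => Arg z / 2) cos); [exact Ha | apply continuous_cos].
  - apply (continuous_Rcomp (fun z => Arg z / 2) sin); [exact Ha | apply continuous_sin].
Qed.

Lemma continuous_C_Cmod {T : UniformSpace} (f : T -> C) x :
  continuous (U := C_UniformSpace) f x ->
  forall eps, 0 < eps -> locally x (fun y => Cmod (f y - f x)%C < eps).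
Proof.
  intros Hf eps Heps.
  exact (proj1 (filterlim_locally_ball_norm (K := C_AbsRing) (U := C_NormedModule) f (f x))
           Hf (mkposreal eps Heps)).
Qed.

(* The remainder is [-(b - a)^2 / (2 a)], and [|b + a| >= Re a]. *)
Lemma sqrt_remainder_bound (a b : C) : 0 < Re a -> 0 < Re b ->
  Cmod ((b - a) - (b * b - a * a) / (a + a))%C
  <= Cmod (b - a)%C / (2 * Cmod a * Re a) * Cmod (b * b - a * a)%C.
Proof.
  intros Ha Hb.
  assert (Ha0 : 0 < Cmod a) by (eapply Rlt_le_trans; [exact Ha | apply Re_le_Cmod]).
  assert (Haa : (a + a)%C <> 0%C) by (apply Re_pos_neq0; rewrite re_plus; lra).
  assert (Hsum : Re a <= Cmod (b + a)%C)
    by (pose proof (Re_le_Cmod (b + a)%C); rewrite re_plus in *; lra).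
  replace ((b - a) - (b * b - a * a) / (a + a))%C with (- ((b - a) * (b - a)) / (a + a))%C
    by (field; exact Haa).
  replace (b * b - a * a)%C with ((b - a) * (b + a))%C by ring.
  replace (a + a)%C with (2 * a)%C by ring.
  rewrite Cmod_div, Cmod_opp, !Cmod_mult, Cmod_R, Rabs_right
    by (try lra; replace (2 * a)%C with (a + a)%C by ring; exact Haa).
  pose proof (Cmod_ge_0 (b - a)%C) as Hd.
  apply Rmult_le_reg_r with (2 * Cmod a * Re a); [nra|].
  field_simplify; [|lra|nra].
  set (d := Cmod (b - a)%C) in *.
  assert (d * d * Re a <= d * d * Cmod (b + a)%C) by (apply Rmult_le_compat_l; nra).
  nra.
Qed.

Lemma is_derive_Csqrt w : Kslit w ->
  is_derive (K := C_AbsRing) (V := C_NormedModule) Csqrt w (/ (Csqrt w + Csqrt w))%C.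
Proof.
  intros HK. split; [apply is_linear_scal_l|].
  intros x Hx.
  apply (is_filter_lim_locally_unique (K := C_AbsRing) (V := AbsRing_NormedModule C_AbsRing)) in Hx.
  subst x. intros eps.
  pose proof (Csqrt_re_pos w HK) as Ha.
  set (a := Csqrt w) in *.
  assert (Ha0 : 0 < Cmod a) by (eapply Rlt_le_trans; [exact Ha | apply Re_le_Cmod]).
  assert (Haa : (a + a)%C <> 0%C) by (apply Re_pos_neq0; rewrite re_plus; lra).
  assert (Hd : 0 < eps * (2 * Cmod a * Re a))
    by (apply Rmult_lt_0_compat; [apply cond_pos | nra]).
  apply locally_C.
  generalize (filter_and _ _ (continuous_C_Cmod Csqrt w (continuous_Csqrt w HK) _ Hd)
                (Kslit_open w HK)).
  apply filter_imp. intros y [Hy Ky]. fold a in Hy.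
  change (Cmod ((Csqrt y - a) - (y - w) * / (a + a))%C <= eps * Cmod (y - w)%C).
  pose proof (Csqrt_re_pos y Ky) as Hb.
  set (b := Csqrt y) in *.
  replace (y - w)%C with (b * b - a * a)%C
    by (unfold a, b; rewrite !Csqrt_sq by assumption; reflexivity).
  change ((b * b - a * a) * / (a + a))%C with ((b * b - a * a) / (a + a))%C.
  eapply Rle_trans; [apply sqrt_remainder_bound; assumption|].
  apply Rmult_le_compat_r; [apply Cmod_ge_0|].
  apply Rle_div_l; [nra | lra].
Qed.

(* [holomorphic_on] differentiates into [C_NormedModule], whereas Coquelicot's
   chain and product rules use [AbsRing_NormedModule C_AbsRing]. *)
Lemma is_derive_C_AbsRing (f : C -> C) z l :
  is_derive (K := C_AbsRing) (V := C_NormedModule) f z l ->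
  is_derive (K := C_AbsRing) (V := AbsRing_NormedModule C_AbsRing) f z l.
Proof. intros [_ Hf]. split; [apply is_linear_scal_l | exact Hf]. Qed.

Lemma is_derive_C_NormedModule (f : C -> C) z l :
  is_derive (K := C_AbsRing) (V := AbsRing_NormedModule C_AbsRing) f z l ->
  is_derive (K := C_AbsRing) (V := C_NormedModule) f z l.
Proof. intros [_ Hf]. split; [apply is_linear_scal_l | exact Hf]. Qed.

Lemma holomorphic_on_comp (U V : C -> Prop) (f m : C -> C) :
  holomorphic_on V f -> holomorphic_on U m -> (forall z, U z -> V (m z)) ->
  holomorphic_on U (fun z => f (m z)).
Proof.
  intros Hf Hm HUV z Hz. apply ex_derive_comp; [apply Hf, HUV, Hz|].
  destruct (Hm z Hz) as [l Hl]. exists l. apply is_derive_C_AbsRing, Hl.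
Qed.

Lemma holomorphic_on_continuous (U : C -> Prop) f z : holomorphic_on U f -> U z ->
  continuous (T := C_UniformSpace) (U := C_UniformSpace) f z.
Proof.
  intros Hf Hz P HP. apply locally_C.
  apply (ex_derive_continuous (K := C_AbsRing) (V := C_NormedModule) f z (Hf z Hz)), HP.
Qed.

Lemma negsq_holomorphic U : holomorphic_on U negsq.
Proof.
  intros z _.
  assert (Hd : ex_derive (K := C_AbsRing) (V := AbsRing_NormedModule C_AbsRing)
                 (fun t : C => (- (t * t))%C) z).
  { eexists.
    apply (is_derive_opp (K := C_AbsRing) (V := AbsRing_NormedModule C_AbsRing) (fun t : C => (t * t)%C)).
    apply (is_derive_mult (K := C_AbsRing) (fun t => t) (fun t => t) z);
      [apply (is_derive_id (K := C_AbsRing)) | apply (is_derive_id (K := C_AbsRing)) | intros; apply Cmult_comm]. }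
  destruct Hd as [l Hl]. exists l. apply is_derive_C_NormedModule, Hl.
Qed.

Lemma isqrt_holomorphic : holomorphic_on Kslit isqrt.
Proof.
  intros w HK.
  assert (Hd : ex_derive (K := C_AbsRing) (V := AbsRing_NormedModule C_AbsRing)
                 (fun t : C => (Ci * Csqrt t)%C) w).
  { eexists.
    apply (is_derive_mult (K := C_AbsRing) (fun _ => Ci) Csqrt w);
      [apply (is_derive_const (K := C_AbsRing) (V := AbsRing_NormedModule C_AbsRing))
      | apply is_derive_C_AbsRing, is_derive_Csqrt, HK | intros; apply Cmult_comm]. }
  destruct Hd as [l Hl]. exists l. apply is_derive_C_NormedModule, Hl.
Qed.

(** * Conformal maps and limits at infinity *)

Lemma conformal_map_comp (U V W : C -> Prop) (m f : C -> C) :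
  conformal_map U V m -> conformal_map V W f ->
  conformal_map U W (fun z => f (m z)).
Proof.
  intros [Hm [Hminj [HmUV HmV]]] [Hf [Hfinj [HfVW HfW]]].
  split; [|split; [|split]].
  - apply (holomorphic_on_comp U V); assumption.
  - intros z1 z2 H1 H2 E. apply Hminj, Hfinj; auto.
  - intros z Hz. apply HfVW, HmUV, Hz.
  - intros w Hw. destruct (HfW w Hw) as [v [Hv <-]]. destruct (HmV v Hv) as [z [Hz <-]].
    exists z. auto.
Qed.

Lemma negsq_conformal : conformal_map Hupper Kslit negsq.
Proof.
  split; [|split; [|split]].
  - apply negsq_holomorphic.
  - intros z1 z2 H1 H2 E. now rewrite <- (isqrt_negsq z1 H1), <- (isqrt_negsq z2 H2), E.
  - apply negsq_Kslit.
  - intros w Hw. exists (isqrt w). split; [apply isqrt_Hupper, Hw | apply negsq_isqrt, Hw].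
Qed.

Lemma isqrt_conformal : conformal_map Kslit Hupper isqrt.
Proof.
  split; [|split; [|split]].
  - apply isqrt_holomorphic.
  - intros w1 w2 H1 H2 E. now rewrite <- (negsq_isqrt w1 H1), <- (negsq_isqrt w2 H2), E.
  - apply isqrt_Hupper.
  - intros z Hz. exists (negsq z). split; [apply negsq_Kslit, Hz | apply isqrt_negsq, Hz].
Qed.

Lemma tends_to_inf_within_comp (S T : C -> Prop) (m F : C -> C) :
  (forall z, S z -> T (m z)) -> tends_to_inf_within S m ->
  tends_to_inf_within T F -> tends_to_inf_within S (fun z => F (m z)).
Proof.
  intros HST Hm HF A. destruct (HF A) as [M HM]. destruct (Hm M) as [N HN].
  exists N. intros z Hz HNz. apply HM; auto.
Qed.

Lemma lim_inf_within_comp (S T : C -> Prop) (m F : C -> C) l :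
  (forall z, S z -> T (m z)) -> tends_to_inf_within S m ->
  lim_inf_within T F l -> lim_inf_within S (fun z => F (m z)) l.
Proof.
  intros HST Hm HF eps Heps. destruct (HF eps Heps) as [M HM]. destruct (Hm M) as [N HN].
  exists N. intros z Hz HNz. apply HM; auto.
Qed.

Lemma lim_inf_within_ext (S : C -> Prop) (F G : C -> C) l :
  (forall z, S z -> F z = G z) -> lim_inf_within S F l -> lim_inf_within S G l.
Proof.
  intros HFG HF eps Heps. destruct (HF eps Heps) as [M HM].
  exists M. intros z Hz HMz. rewrite <- HFG by exact Hz. auto.
Qed.

Lemma tends_to_inf_within_sqrt_Cmod (S : C -> Prop) (m : C -> C) :
  (forall z, Cmod (m z) = sqrt (Cmod z)) -> tends_to_inf_within S m.
Proof.
  intros Hm A. exists (Rmax A 0 * Rmax A 0). intros z _ Hz. rewrite Hm.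
  pose proof (Rmax_l A 0). pose proof (Rmax_r A 0).
  apply Rle_lt_trans with (Rmax A 0); [lra|].
  rewrite <- (sqrt_square (Rmax A 0)) at 1 by lra.
  apply sqrt_lt_1; nra.
Qed.

Lemma tends_to_inf_within_negsq (S : C -> Prop) : tends_to_inf_within S negsq.
Proof.
  intros A. exists (Rmax A 1). intros z _ Hz. rewrite Cmod_negsq.
  pose proof (Rmax_l A 1). pose proof (Rmax_r A 1). nra.
Qed.

Lemma lim_inf_within_negsq (S : C -> Prop) (F : C -> C) l :
  lim_inf_within S F l -> lim_inf_within S (fun z => negsq (F z)) (negsq l).
Proof.
  intros HF eps Heps. pose proof (Cmod_ge_0 l).
  set (d := Rmin 1 (eps / (1 + 2 * Cmod l))).
  assert (Hd : 0 < d) by (apply Rmin_pos; [lra | apply Rdiv_lt_0_compat; lra]).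
  assert (Hd1 : d <= 1) by apply Rmin_l.
  assert (Hde : d * (1 + 2 * Cmod l) <= eps).
  { assert (d <= eps / (1 + 2 * Cmod l)) by apply Rmin_r.
    apply Rmult_le_compat_r with (r := 1 + 2 * Cmod l) in H0; [|lra].
    field_simplify in H0; lra. }
  destruct (HF d Hd) as [M HM]. exists M. intros z Hz HMz.
  specialize (HM z Hz HMz).
  unfold negsq. replace (- (F z * F z) - - (l * l))%C with (- (F z * F z - l * l))%C by ring.
  rewrite Cmod_opp. pose proof (Cmod_sq_sub_le (F z) l ltac:(lra)).
  pose proof (Cmod_ge_0 (F z - l)%C). nra.
Qed.

Lemma angK_lim_inf_isqrt (F : C -> C) : angH_lim_inf F -> angK_lim_inf (fun w => F (isqrt w)).
Proof.
  intros HF theta Ht. apply (tends_to_inf_within_comp _ (sectorH (theta / 2))).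
  - apply isqrt_sectorK.
  - apply tends_to_inf_within_sqrt_Cmod, Cmod_isqrt.
  - apply HF. lra.
Qed.


Lemma angK_lim_isqrt (F : C -> C) l : angH_lim F l -> angK_lim (fun w => F (isqrt w)) l.
Proof.
  intros HF theta Ht. apply (lim_inf_within_comp _ (sectorH (theta / 2))).
  - apply isqrt_sectorK.
  - apply tends_to_inf_within_sqrt_Cmod, Cmod_isqrt.
  - apply HF. lra.
Qed.

Lemma angH_lim_inf_negsq (G : C -> C) : angK_lim_inf G -> angH_lim_inf (fun z => G (negsq z)).
Proof.
  intros HG theta Ht. apply (tends_to_inf_within_comp _ (sectorK (2 * theta))).
  - intros z. apply negsq_sectorH. lra.
  - apply tends_to_inf_within_negsq.
  - apply HG. lra.
Qed.

Lemma angH_lim_negsq (G : C -> C) l : angK_lim G l -> angH_lim (fun z => G (negsq z)) l.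
Proof.
  intros HG theta Ht. apply (lim_inf_within_comp _ (sectorK (2 * theta))).
  - intros z. apply negsq_sectorH. lra.
  - apply tends_to_inf_within_negsq.
  - apply HG. lra.
Qed.

(** * Sign of a nonvanishing function on far sectors *)

Definition far_sectorH (theta M : R) (z : C) : Prop := sectorH theta z /\ M < Cmod z.

Lemma sign_constant_on_interval (h : R -> R) :
  (forall t, 0 <= t <= 1 -> continuity_pt h t) ->
  (forall t, 0 <= t <= 1 -> h t <> 0) ->
  (0 < h 0 <-> 0 < h 1).
Proof.
  intros Hc Hn.
  assert (h 0 <> 0) by (apply Hn; lra). assert (h 1 <> 0) by (apply Hn; lra).
  split; intros Hpos; apply Rnot_le_lt; intros Hneg.
  - destruct (Ranalysis5.IVT_interv (fun t => - h t) 0 1) as [t [Ht Eh]]; try lra.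
    + intros t Ht. apply continuity_pt_opp, Hc, Ht.
    + apply (Hn t Ht). lra.
  - destruct (Ranalysis5.IVT_interv h 0 1) as [t [Ht Eh]]; try lra; auto.
    apply (Hn t Ht Eh).
Qed.

Lemma sign_constant_along_path (S : C -> Prop) (Psi : C -> R) (p : R -> C) a b :
  (forall z, S z -> continuous (T := C_UniformSpace) Psi z) ->
  (forall t, continuous (U := C_UniformSpace) p t) ->
  (forall t, 0 <= t <= 1 -> S (p t)) ->
  (forall z, S z -> Psi z <> 0) ->
  p 0 = a -> p 1 = b ->
  (0 < Psi a <-> 0 < Psi b).
Proof.
  intros HPsi Hp HS Hn <- <-.
  apply (sign_constant_on_interval (fun t => Psi (p t))).
  - intros t Ht. apply continuity_pt_filterlim.
    apply (continuous_comp p Psi); [apply Hp | apply HPsi, HS, Ht].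
  - intros t Ht. apply Hn, HS, Ht.
Qed.

Lemma polar_far_sectorH theta M r psi : 0 < theta < PI / 2 -> 0 <= M -> M < r ->
  Rabs (psi - PI / 2) < theta -> far_sectorH theta M (r * cos psi, r * sin psi).
Proof.
  intros Ht HM Hr Hp. apply Rabs_lt_between' in Hp.
  unfold far_sectorH. rewrite Cmod_polar by lra. split; [split|lra].
  - unfold Hupper, Im; cbn. apply Rmult_lt_0_compat; [lra|]. apply sin_gt_0; lra.
  - rewrite Arg_polar by lra. apply Rabs_def1; lra.
Qed.

Lemma imag_far_sectorH theta M y : 0 < theta < PI / 2 -> 0 <= M -> M < y ->
  far_sectorH theta M (0, y).
Proof.
  intros Ht HM Hy.
  replace ((0, y) : C) with ((y * cos (PI / 2), y * sin (PI / 2)) : C)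
    by (rewrite cos_PI2, sin_PI2; apply C_eq; cbn; ring).
  apply polar_far_sectorH; auto.
  rewrite Rminus_diag, Rabs_R0. lra.
Qed.


Lemma far_sectorH_mono theta M M' z : M <= M' -> far_sectorH theta M' z -> far_sectorH theta M z.
Proof. intros HM [Hz HMz]. split; [exact Hz | lra]. Qed.

Lemma continuous_polar_arc (r a b t : R) :
  continuous (U := C_UniformSpace) (fun t => ((r * cos (a + t * b), r * sin (a + t * b)) : C)) t.
Proof.
  assert (Hl : continuous (fun t => a + t * b) t)
    by (apply continuous_Rplus; [apply continuous_const|];
        apply continuous_Rmult; [apply continuous_id | apply continuous_const]).
  apply continuous_C_pair; apply continuous_Rmult; try apply continuous_const.
  - apply (continuous_Rcomp (fun t => a + t * b) cos); [exact Hl | apply continuous_cos].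
  - apply (continuous_Rcomp (fun t => a + t * b) sin); [exact Hl | apply continuous_sin].
Qed.

Lemma continuous_imag_segment (a b t : R) :
  continuous (U := C_UniformSpace) (fun t => ((0, a + t * b) : C)) t.
Proof.
  apply continuous_C_pair; [apply continuous_const|].
  apply continuous_Rplus; [apply continuous_const|].
  apply continuous_Rmult; [apply continuous_id | apply continuous_const].
Qed.

(* A point of the far sector is joined to [i (M + 1)] by an arc of the circle
   [|z| = r] followed by a segment of the imaginary axis. *)
Lemma sign_constant_on_far_sectorH (Psi : C -> R) theta M :
  0 < theta < PI / 2 -> 0 <= M ->
  (forall z, far_sectorH theta M z -> continuous (T := C_UniformSpace) Psi z) ->
  (forall z, far_sectorH theta M z -> Psi z <> 0) ->
  forall z, far_sectorH theta M z -> (0 < Psi z <-> 0 < Psi (0, M + 1)).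
Proof.
  intros Ht HM HPsi Hn z [[Hz Hphi] HMz].
  assert (HK : Kslit z) by (unfold Kslit, Hupper in *; lra).
  destruct (polar_form z HK) as [Hre Him].
  set (r := Cmod z) in *. set (phi := Arg z) in *. clearbody r phi.
  apply Rabs_lt_between' in Hphi.
  transitivity (0 < Psi (0, r)).
  - apply (sign_constant_along_path (far_sectorH theta M) Psi
             (fun t => ((r * cos (phi + t * (PI / 2 - phi)), r * sin (phi + t * (PI / 2 - phi))) : C)));
      auto using continuous_polar_arc.
    + intros t Htt. apply polar_far_sectorH; auto.
      apply Rabs_lt_between'. nra.
    + apply C_eq; cbn; rewrite Rmult_0_l, Rplus_0_r; auto.
    + rewrite Rmult_1_l. replace (phi + (PI / 2 - phi)) with (PI / 2) by ring.
      rewrite cos_PI2, sin_PI2. apply C_eq; cbn; ring.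
  - apply (sign_constant_along_path (far_sectorH theta M) Psi
             (fun t => ((0, r + t * (M + 1 - r)) : C)));
      auto using continuous_imag_segment.
    + intros t Htt. apply imag_far_sectorH; auto.
      destruct (Rle_lt_or_eq_dec 0 t) as [Ht0 | <-]; nra.
    + apply C_eq; cbn; ring.
    + apply C_eq; cbn; ring.
Qed.

(** * The limit of sqrt (g (-z^2)) / z *)

Section SqrtQuotientLimit.

Variables (g : C -> C) (c : C).
Hypothesis g_holomorphic : holomorphic_on Kslit g.
Hypothesis g_Kslit : forall w, Kslit w -> Kslit (g w).
Hypothesis g_quot_lim : angK_lim (fun w => (g w / w)%C) c.
Hypothesis c_neq0 : c <> 0%C.

Definition sqrt_quot (z : C) : C := (Csqrt (g (negsq z)) / z)%C.

Definition Phi (sigma z : C) : R := Re (Csqrt (g (negsq z)) * Cconj (z * sigma))%C.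

Lemma sqrt_quot_near_pm sigma theta d : (sigma * sigma)%C = (- c)%C ->
  0 < theta < PI / 2 -> 0 < d ->
  exists M, 0 <= M /\ forall z, far_sectorH theta M z ->
    Cmod (sqrt_quot z - sigma)%C < d \/ Cmod (sqrt_quot z + sigma)%C < d.
Proof.
  intros Hsig Ht Hd.
  destruct (angH_lim_negsq _ _ g_quot_lim theta Ht (d * d) ltac:(nra)) as [M HM].
  exists (Rmax M 0). split; [apply Rmax_r|]. intros z [Hz HMz].
  pose proof (Rmax_l M 0).
  apply close_to_pm_sqrt; [exact Hd|].
  rewrite Hsig.
  assert (E : (g (negsq z) / negsq z)%C = negsq (sqrt_quot z))
    by (apply quot_negsq; [apply g_Kslit, negsq_Kslit, Hz | apply Hupper_neq0, Hz]).
  specialize (HM z Hz ltac:(lra)). cbv beta in HM. rewrite E in HM.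
  unfold negsq in HM. replace (sqrt_quot z * sqrt_quot z - - c)%C
    with (- (- (sqrt_quot z * sqrt_quot z) - c))%C by ring.
  now rewrite Cmod_opp.
Qed.

Lemma Phi_eq sigma z : Hupper z -> Phi sigma z = Cmod z ^ 2 * Re (sqrt_quot z * Cconj sigma)%C.
Proof.
  intros Hz. unfold Phi, sqrt_quot.
  replace (Csqrt (g (negsq z)) * Cconj (z * sigma))%C
    with (RtoC (Cmod z ^ 2) * (Csqrt (g (negsq z)) / z * Cconj sigma))%C.
  - apply re_scal_l.
  - rewrite Cmod2_conj, Cmult_conj. field. apply Hupper_neq0, Hz.
Qed.

Lemma Phi_opp sigma z : Phi (- sigma) z = - Phi sigma z.
Proof.
  unfold Phi. replace (z * - sigma)%C with (- (z * sigma))%C by ring.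
  rewrite Copp_conj. destruct (Csqrt _), (Cconj _). cbn. ring.
Qed.

Lemma Phi_pos sigma z : Hupper z -> Cmod (sqrt_quot z - sigma)%C < Cmod sigma / 2 -> 0 < Phi sigma z.
Proof.
  intros Hz Hd. rewrite Phi_eq by exact Hz.
  assert (Hz0 : 0 < Cmod z) by apply Cmod_gt_0, Hupper_neq0, Hz.
  apply Rmult_lt_0_compat; [apply pow_lt, Hz0|].
  replace (sqrt_quot z * Cconj sigma)%C
    with (RtoC (Cmod sigma ^ 2) + (sqrt_quot z - sigma) * Cconj sigma)%C
    by (rewrite Cmod2_conj; ring).
  rewrite re_plus. cbn [Re RtoC fst].
  pose proof (re_le_Cmod ((sqrt_quot z - sigma) * Cconj sigma)%C) as Hre.
  rewrite Cmod_mult, Cmod_conj in Hre. apply Rabs_le_between in Hre.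
  pose proof (Cmod_ge_0 (sqrt_quot z - sigma)%C). nra.
Qed.

Lemma Phi_continuous sigma z : Hupper z -> continuous (T := C_UniformSpace) (Phi sigma) z.
Proof.
  intros Hz.
  assert (Hf : continuous (T := C_UniformSpace) (U := C_UniformSpace)
                 (fun z => Csqrt (g (negsq z))) z).
  { apply (continuous_comp (fun z => g (negsq z)) Csqrt).
    - apply (holomorphic_on_continuous Hupper); [|exact Hz].
      apply (holomorphic_on_comp Hupper Kslit); auto using negsq_holomorphic, negsq_Kslit.
    - apply continuous_Csqrt, g_Kslit, negsq_Kslit, Hz. }
  assert (HRe : continuous (T := C_UniformSpace) (fun z => Re (Csqrt (g (negsq z)))) z)
    by (apply (continuous_comp _ Re); [exact Hf | apply continuous_Re]).
  assert (HIm : continuous (T := C_UniformSpace) (fun z => Im (Csqrt (g (negsq z)))) z)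
    by (apply (continuous_comp _ Im); [exact Hf | apply continuous_Im]).
  apply (continuous_ext (fun z => Re (Csqrt (g (negsq z))) * (Re z * Re sigma - Im z * Im sigma)
                             + Im (Csqrt (g (negsq z))) * (Re z * Im sigma + Im z * Re sigma))).
  - intros x. unfold Phi. destruct (Csqrt _), x, sigma. cbn. ring.
  - apply continuous_Rplus; apply continuous_Rmult; auto.
    + apply continuous_Rminus; apply continuous_Rmult;
        auto using continuous_Re, continuous_Im, continuous_const.
    + apply continuous_Rplus; apply continuous_Rmult;
        auto using continuous_Re, continuous_Im, continuous_const.
Qed.

Lemma sigma_neq0 sigma : (sigma * sigma)%C = (- c)%C -> sigma <> 0%C.
Proof.
  intros Hsig E. apply c_neq0. rewrite E in Hsig.
  replace c with (- - c)%C by ring. rewrite <- Hsig. ring.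
Qed.

Lemma sqrt_quot_near_sign sigma theta d : (sigma * sigma)%C = (- c)%C ->
  0 < theta < PI / 2 -> 0 < d ->
  exists M, 0 <= M /\ forall z, far_sectorH theta M z ->
    (0 < Phi sigma z /\ Cmod (sqrt_quot z - sigma)%C < d) \/ Phi sigma z < 0.
Proof.
  intros Hsig Ht Hd.
  assert (Hs : 0 < Cmod sigma) by apply Cmod_gt_0, (sigma_neq0 _ Hsig).
  destruct (sqrt_quot_near_pm sigma theta (Rmin d (Cmod sigma / 2)) Hsig Ht)
    as [M [HM0 HM]]; [apply Rmin_pos; lra|].
  exists M. split; [exact HM0|]. intros z Hz.
  pose proof (Rmin_l d (Cmod sigma / 2)). pose proof (Rmin_r d (Cmod sigma / 2)).
  destruct (HM z Hz) as [Hnear | Hnear]; [left | right].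
  - split; [apply Phi_pos; [apply Hz | lra] | lra].
  - rewrite <- (Ropp_involutive (Phi sigma z)), <- Phi_opp.
    apply Ropp_lt_gt_0_contravar, Phi_pos; [apply Hz|].
    rewrite Cmod_opp. replace (sqrt_quot z - - sigma)%C with (sqrt_quot z + sigma)%C by ring. lra.
Qed.

Lemma sqrt_quot_lim_of_Phi_pos sigma Y : (sigma * sigma)%C = (- c)%C ->
  (forall y, Y < y -> 0 < Phi sigma (0, y)) -> angH_lim sqrt_quot sigma.
Proof.
  intros Hsig HY theta Ht eps Heps.
  destruct (sqrt_quot_near_sign sigma theta eps Hsig Ht Heps) as [M [HM0 HM]].
  set (M' := Rmax M Y).
  assert (HMM' : M <= M') by apply Rmax_l.
  assert (HYM' : Y <= M') by apply Rmax_r.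
  exists M'. intros z Hz HMz.
  assert (Hfar : far_sectorH theta M' z) by (split; assumption).
  assert (Hsign : 0 < Phi sigma z).
  { apply (sign_constant_on_far_sectorH (Phi sigma) theta M' Ht ltac:(lra)); auto.
    - intros u Hu. apply Phi_continuous, Hu.
    - intros u Hu. destruct (HM u (far_sectorH_mono _ _ _ _ HMM' Hu)) as [[H _] | H]; lra.
    - apply HY. lra. }
  destruct (HM z (far_sectorH_mono _ _ _ _ HMM' Hfar)) as [[_ H] | H]; [exact H | lra].
Qed.

Lemma sqrt_quot_lim : exists tau : C, tau <> 0%C /\ angH_lim sqrt_quot tau.
Proof.
  destruct (Cexists_sqrt (- c)%C) as [sigma Hsig].
  assert (Hsig' : (- sigma * - sigma)%C = (- c)%C) by (rewrite <- Hsig; ring).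
  assert (Hpi : 0 < PI / 4 < PI / 2) by (pose proof PI_RGT_0; lra).
  destruct (sqrt_quot_near_sign sigma (PI / 4) 1 Hsig Hpi ltac:(lra)) as [M [HM0 HM]].
  assert (Hnz : forall z, far_sectorH (PI / 4) M z -> Phi sigma z <> 0)
    by (intros z Hz; destruct (HM z Hz) as [[H _] | H]; lra).
  assert (Haxis : forall y, M < y -> (0 < Phi sigma (0, y) <-> 0 < Phi sigma (0, M + 1))).
  { intros y Hy. apply (sign_constant_on_far_sectorH (Phi sigma) (PI / 4) M); auto.
    - intros u Hu. apply Phi_continuous, Hu.
    - apply imag_far_sectorH; auto. }
  destruct (Rlt_dec 0 (Phi sigma (0, M + 1))) as [Hpos | Hneg].
  - exists sigma. split; [apply sigma_neq0, Hsig|].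
    apply (sqrt_quot_lim_of_Phi_pos sigma M Hsig). intros y Hy. now apply Haxis.
  - exists (- sigma)%C. split; [apply sigma_neq0, Hsig'|].
    apply (sqrt_quot_lim_of_Phi_pos (- sigma) M Hsig'). intros y Hy.
    rewrite Phi_opp.
    assert (Phi sigma (0, y) <> 0) by (apply Hnz, imag_far_sectorH; auto; lra).
    assert (~ 0 < Phi sigma (0, y)) by (rewrite Haxis; assumption).
    lra.
Qed.

End SqrtQuotientLimit.

Lemma conformal_K_of_conformal_H (Omega : C -> Prop) (f : C -> C) :
  (forall w, Omega w -> Kslit w) ->
  conformal_map Hupper Omega f -> angH_lim_inf f ->
  conformal_at_infinity (fun z => Csqrt (f z)) ->
  conformal_map Kslit Omega (fun w => f (isqrt w)) /\
  angK_lim_inf (fun w => f (isqrt w)) /\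
  exists c : C, c <> 0%C /\ angK_lim (fun w => (f (isqrt w) / w)%C) c.
Proof.
  intros HOK Hf Hinf [_ [c [Hc Hlim]]].
  split; [apply (conformal_map_comp _ Hupper); [apply isqrt_conformal | exact Hf]|].
  split; [apply angK_lim_inf_isqrt, Hinf|].
  exists (negsq c). split.
  - intros E. apply Hc, Cmod_eq_0. apply (f_equal Cmod) in E.
    rewrite Cmod_negsq, Cmod_0 in E. nra.
  - intros theta Ht.
    apply (lim_inf_within_ext _ (fun w => negsq (Csqrt (f (isqrt w)) / isqrt w))).
    + intros w [Hw _]. rewrite <- quot_negsq, negsq_isqrt; auto.
      * apply HOK, (proj1 (proj2 (proj2 Hf))), isqrt_Hupper, Hw.
      * apply Hupper_neq0, isqrt_Hupper, Hw.
    + apply (angK_lim_isqrt (fun z => negsq (Csqrt (f z) / z))); auto.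
      intros theta' Ht'. apply lim_inf_within_negsq, Hlim, Ht'.
Qed.

Lemma conformal_H_of_conformal_K (Omega : C -> Prop) (g : C -> C) (c : C) :
  (forall w, Omega w -> Kslit w) ->
  conformal_map Kslit Omega g -> angK_lim_inf g ->
  c <> 0%C -> angK_lim (fun w => (g w / w)%C) c ->
  conformal_map Hupper Omega (fun z => g (negsq z)) /\
  angH_lim_inf (fun z => g (negsq z)) /\
  conformal_at_infinity (fun z => Csqrt (g (negsq z))).
Proof.
  intros HOK Hg Hinf Hc Hlim.
  assert (HgK : forall w, Kslit w -> Kslit (g w))
    by (intros w Hw; apply HOK, (proj1 (proj2 (proj2 Hg))), Hw).
  split; [apply (conformal_map_comp _ Kslit); [apply negsq_conformal | exact Hg]|].
  split; [apply angH_lim_inf_negsq, Hinf|].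
  split.
  - intros theta Ht. apply (tends_to_inf_within_comp _ (fun _ => True)); auto.
    + exact (angH_lim_inf_negsq g Hinf theta Ht).
    + apply tends_to_inf_within_sqrt_Cmod, Cmod_Csqrt.
  - apply (sqrt_quot_lim g c); auto. apply Hg.
Qed.

Theorem lemma5p8 (Omega : C -> Prop) :
  is_domain Omega -> simply_connected Omega ->
  (forall w, Omega w -> Kslit w) ->
  ((exists f : C -> C,
      conformal_map Hupper Omega f /\ angH_lim_inf f /\
      conformal_at_infinity (fun z => Csqrt (f z)))
   <->
   (exists g : C -> C,
      conformal_map Kslit Omega g /\ angK_lim_inf g /\
      exists c : C, c <> 0%C /\ angK_lim (fun w => (g w / w)%C) c)).
Proof.
  intros _ _ HOK. split.
  - intros [f [Hf [Hinf Hsqrt]]].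
    exists (fun w => f (isqrt w)). now apply conformal_K_of_conformal_H.
  - intros [g [Hg [Hinf [c [Hc Hlim]]]]].
    exists (fun z => g (negsq z)). now apply (conformal_H_of_conformal_K Omega g c).
Qed.
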